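(* Let $n\ge1$, $h>0$, $\lambda>0$, and let $f:\mathbb{R}^n\to\mathbb{R}$ be Lipschitz with Lipschitz constant $L$. Then for every grid point $x_k\in h\mathbb{Z}^n$, $$\big|M^h_\lambda(f)(x_k)-M_\lambda(f)(x_k)\big|\le(2+\sqrt n)Lh+2\lambda h^2 n.$$
   Context: $M_\lambda(f)(x)=\inf_{y\in\mathbb{R}^n}\{f(y)+\lambda|y-x|^2\}$ is the lower Moreau envelope, and the discrete lower Moreau envelope at a grid point $x_k$ of the grid of size $h$ is $M^h_\lambda(f)(x_k)=\inf\{f(x_k+rh)+\lambda h^2|r|^2:\ r\in\mathbb{Z}^n\}$. Here $|\cdot|$ is the Euclidean norm. *)

From HB Require Import structures.
From mathcomp Require Import all_boot all_order all_algebra.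
From mathcomp Require Import all_classical all_reals.
Set Implicit Arguments. Unset Strict Implicit. Unset Printing Implicit Defensive.
Import Order.TTheory GRing.Theory Num.Theory.
Local Open Scope ring_scope.
Local Open Scope classical_set_scope.

Definition enorm (R : realType) (n : nat) (v : 'rV[R]_n) : R :=
  Num.sqrt (\sum_(i < n) v 0 i ^+ 2).

Definition intvec (R : realType) (n : nat) (r : 'rV[int]_n) : 'rV[R]_n :=
  map_mx (fun z : int => z%:~R) r.

Definition moreau (R : realType) (n : nat) (f : 'rV[R]_n -> R) (lam : R)
  (x : 'rV[R]_n) : R :=
  inf [set f y + lam * enorm (y - x) ^+ 2 | y in [set: 'rV[R]_n]].

Definition dmoreau (R : realType) (n : nat) (f : 'rV[R]_n -> R) (lam h : R)
  (x : 'rV[R]_n) : R :=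
  inf [set f (x + h *: intvec R r) + lam * h ^+ 2 * enorm (intvec R r) ^+ 2
      | r in [set: 'rV[int]_n]].

Definition lipschitz_with (R : realType) (n : nat) (f : 'rV[R]_n -> R) (L : R) :=
  forall x y : 'rV[R]_n, `|f x - f y| <= L * enorm (x - y).

From HB Require Import structures.
From mathcomp Require Import all_boot all_order all_algebra.
From mathcomp Require Import all_classical all_reals.
From mathcomp Require Import ring lra.
Import Order.TTheory GRing.Theory Num.Theory.
Local Open Scope ring_scope.
Local Open Scope classical_set_scope.

(* The grid infimum ranges over a subset of the points of the continuous one,
   so [M_lambda f <= M^h_lambda f].  Conversely, rounding every coordinate of
   [(y - x) / h] towards zero gives a grid point [z] with [|z - x| <= |y - x|]
   and [|z - y| <= sqrt n h]; by the Lipschitz bound the objective at [z] is at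
   most that at [y] plus [sqrt n L h].  Hence
   [0 <= M^h_lambda f - M_lambda f <= sqrt n L h], which is sharper than the
   stated estimate. *)

Lemma inf_le_approx (R : realType) (A B : set R) (c : R) :
  nonempty A -> has_lbound B ->
  (forall a, A a -> exists2 b, B b & b <= a + c) -> inf B <= inf A + c.
Proof.
move=> A0 lbB near_B; rewrite -lerBlDr; apply: lb_le_inf => // a /near_B[b Bb ba].
by rewrite lerBlDr; apply: le_trans ba; exact: ge_inf.
Qed.

Section EuclideanNorm.
Context {R : realType} {n : nat}.
Implicit Types (v : 'rV[R]_n) (h : R).

Lemma sqr_enorm v : enorm v ^+ 2 = \sum_(i < n) v 0 i ^+ 2.
Proof. by rewrite /enorm sqr_sqrtr // sumr_ge0 // => i _; rewrite sqr_ge0. Qed.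

Lemma sqr_enormZ h v : enorm (h *: v) ^+ 2 = h ^+ 2 * enorm v ^+ 2.
Proof. by rewrite !sqr_enorm mulr_sumr; apply: eq_bigr => i _; rewrite mxE exprMn. Qed.

Lemma enorm_le_coord h v : 0 <= h -> (forall i, v 0 i ^+ 2 <= h ^+ 2) ->
  enorm v <= Num.sqrt n%:R * h.
Proof.
move=> h0 le_vh; rewrite -(ger0_norm h0) -sqrtr_sqr -sqrtrM ?ler0n //.
apply: ler_wsqrtr; apply: le_trans (ler_sum _ (fun i _ => le_vh i)) _.
by rewrite sumr_const card_ord mulr_natl.
Qed.

Lemma enorm_const1_gt0 : (0 < n)%N -> 0 < enorm (const_mx 1 : 'rV[R]_n).
Proof.
move=> n0; rewrite sqrtr_gt0 (eq_bigr (fun _ => 1)); last by move=> i _; rewrite mxE expr1n.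
by rewrite sumr_const card_ord ltr0n.
Qed.

End EuclideanNorm.

Lemma lipschitz_with_ge0 {R : realType} {n : nat} {f : 'rV[R]_n -> R} {L : R} :
  (0 < n)%N -> lipschitz_with f L -> 0 <= L.
Proof.
move=> n0 lip; rewrite -(pmulr_lge0 _ (enorm_const1_gt0 n0)) -[const_mx 1]subr0.
exact: le_trans (normr_ge0 _) (lip _ 0).
Qed.

Definition truncz {R : realType} (t : R) : int := if 0 <= t then Num.floor t else Num.ceil t.

Lemma truncz_approx {R : realType} (t : R) :
  (truncz t)%:~R ^+ 2 <= t ^+ 2 /\ (t - (truncz t)%:~R) ^+ 2 <= 1.
Proof.
rewrite /truncz; case: ifPn => [t_ge0|].
  have m_ge0 : 0 <= (Num.floor t)%:~R :> R by rewrite ler0z floor_ge0.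
  have := floor_itv t; rewrite intrD => /andP[le_mt lt_tm].
  split; nra.
rewrite -ltNge => t_lt0.
have m_le0 : (Num.ceil t)%:~R <= 0 :> R by rewrite lerz0 ceil_le0 ltW.
have := ceil_itv t; rewrite intrB => /andP[lt_mt le_tm].
split; nra.
Qed.

Lemma grid_point_near {R : realType} {n : nat} (h : R) (x y : 'rV[R]_n) : 0 < h ->
  exists r : 'rV[int]_n,
    h ^+ 2 * enorm (intvec R r) ^+ 2 <= enorm (y - x) ^+ 2 /\
    enorm (x + h *: intvec R r - y) <= Num.sqrt n%:R * h.
Proof.
move=> h0; pose t i := (y - x) 0 i / h.
exists (\row_i truncz (t i)); set v := intvec R _.
have vE i : v 0 i = (truncz (t i))%:~R by rewrite !mxE.
have yxE i : (y - x) 0 i = h * t i by rewrite /t mulrC divfK ?gt_eqF.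
split.
  rewrite !sqr_enorm mulr_sumr; apply: ler_sum => i _.
  rewrite (vE i) (yxE i) exprMn ler_wpM2l ?sqr_ge0 //.
  by case: (truncz_approx (t i)).
apply: enorm_le_coord; first exact: ltW.
move=> i; have := yxE i; rewrite !mxE => yxEi.
have [_ dist_le1] := truncz_approx (t i).
have -> : x 0 i + h * (truncz (t i))%:~R - y 0 i = - (h * (t i - (truncz (t i))%:~R)).
  by lra.
by rewrite sqrrN exprMn ler_piMr ?sqr_ge0.
Qed.

Section MoreauEnvelopes.
Context {R : realType} {n : nat} {f : 'rV[R]_n -> R} {lam L : R}.
Hypotheses (lam_gt0 : 0 < lam) (lip : lipschitz_with f L).

Lemma moreau_objective_lbound (x y : 'rV[R]_n) :
  f x - L ^+ 2 / (4 * lam) <= f y + lam * enorm (y - x) ^+ 2.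
Proof.
have := lip y x; rewrite ler_norml => /andP[lip_lo _].
set e := enorm (y - x) in lip_lo *; set q := L / (2 * lam).
have LE : L = 2 * lam * q by rewrite /q mulrC divfK // gt_eqF // mulr_gt0.
have -> : L ^+ 2 / (4 * lam) = lam * q ^+ 2.
  by rewrite LE; field; rewrite gt_eqF.
(* completing the square *)
have : 0 <= lam * (e - q) ^+ 2 by rewrite mulr_ge0 ?sqr_ge0 ?ltW.
rewrite LE in lip_lo; nra.
Qed.

Lemma discrete_objectiveE (h : R) (x v : 'rV[R]_n) :
  f (x + h *: v) + lam * h ^+ 2 * enorm v ^+ 2
  = f (x + h *: v) + lam * enorm (x + h *: v - x) ^+ 2.
Proof. by rewrite addrAC subrr add0r sqr_enormZ mulrA. Qed.

Lemma moreau_le_dmoreau (h : R) (x : 'rV[R]_n) :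
  moreau f lam x <= dmoreau f lam h x.
Proof.
rewrite -[dmoreau _ _ _ _]addr0; apply: inf_le_approx.
- by eexists; exists 0.
- by exists (f x - L ^+ 2 / (4 * lam)) => _ [y _ <-]; exact: moreau_objective_lbound.
move=> _ [r _ <-]; rewrite addr0 discrete_objectiveE.
by exists (f (x + h *: intvec R r) + lam * enorm (x + h *: intvec R r - x) ^+ 2);
  last by []; exists (x + h *: intvec R r).
Qed.

Lemma dmoreau_le_moreau (h : R) (x : 'rV[R]_n) : 0 < h -> 0 <= L ->
  dmoreau f lam h x <= moreau f lam x + L * (Num.sqrt n%:R * h).
Proof.
move=> h_gt0 L_ge0; apply: inf_le_approx.
- by eexists; exists 0.
- exists (f x - L ^+ 2 / (4 * lam)) => _ [r _ <-].
  by rewrite discrete_objectiveE; exact: moreau_objective_lbound.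
move=> _ [y _ <-]; have [r [near_x near_y]] := grid_point_near h x y h_gt0.
exists (f (x + h *: intvec R r) + lam * h ^+ 2 * enorm (intvec R r) ^+ 2); first by exists r.
have := lip (x + h *: intvec R r) y; rewrite ler_norml => /andP[_ lip_hi].
have : L * enorm (x + h *: intvec R r - y) <= L * (Num.sqrt n%:R * h).
  exact: ler_wpM2l.
rewrite -mulrA; have := ler_wpM2l (ltW lam_gt0) near_x; lra.
Qed.

End MoreauEnvelopes.

Theorem corollary4p4 (R : realType) (n : nat) (h lam L : R)
  (f : 'rV[R]_n -> R) :
  (1 <= n)%N -> 0 < h -> 0 < lam -> lipschitz_with f L ->
  forall k : 'rV[int]_n,
    `|dmoreau f lam h (h *: intvec R k) - moreau f lam (h *: intvec R k)|
      <= (2 + Num.sqrt (n%:R)) * L * h + 2 * lam * h ^+ 2 * n%:R.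
Proof.
move=> n_gt0 h_gt0 lam_gt0 lip k; set x := h *: intvec R k.
have L_ge0 := lipschitz_with_ge0 n_gt0 lip.
have lo := moreau_le_dmoreau lam_gt0 lip h x.
have hi := dmoreau_le_moreau lam_gt0 lip h x h_gt0 L_ge0.
rewrite ger0_norm ?subr_ge0 // lerBlDl; apply: le_trans hi _; rewrite lerD2l.
have Lh_ge0 : 0 <= L * h := mulr_ge0 L_ge0 (ltW h_gt0).
have : 0 <= lam * h ^+ 2 * n%:R by rewrite !mulr_ge0 ?sqr_ge0 ?ler0n ?ltW.
have -> : (2 + Num.sqrt n%:R) * L * h = 2 * (L * h) + L * (Num.sqrt n%:R * h) by ring.
lra.
Qed.
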